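(* Let the standing assumptions hold, let $\alpha>0$ and $p\in(0,1]$, and let $(\bm{x}^\star,\bm{w}^\star,\bm{u}_b^\star)$ satisfy $$\bm{w}^\star=\bm{x}^\star-\alpha\nabla F(\bm{x}^\star),\quad \bm{x}^\star=\mathrm{prox}_{\alpha R}\big(\bm{A}(\bm{w}^\star-\sqrt{\bm{B}}\bm{u}_b^\star)\big),\quad \bm{0}=\sqrt{\bm{B}}\big(\bm{w}^\star-\sqrt{\bm{B}}\bm{u}_b^\star\big),$$ with $\bm{u}_b^\star\in\mathrm{range}(\sqrt{\bm{B}})$. Then the iterates of the algorithm below satisfy, for every $k\ge 0$, $$\mathbb{E}\Big[\|\bm{x}^{k+1}-\bm{x}^\star\|^2+\tfrac{1}{p^2}\|\bm{u}^{k+1}-\bm{u}_b^\star\|^2\,\Big|\,\mathcal{F}_k\Big]\le \|\bm{w}^k-\bm{w}^\star\|^2+\big(1-p^2\sigma_m(\bm{B})\big)\tfrac{1}{p^2}\|\bm{u}^k-\bm{u}_b^\star\|^2,$$ where $\mathcal{F}_k$ is the $\sigma$-algebra generated by $\theta_0,\dots,\theta_{k-1}$ (the expectation is over $\theta_k$).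
   Context: Standing assumptions: $f_1,\dots,f_n:\mathbb{R}^d\to\mathbb{R}$ are $\mu$-strongly convex with $\mu\ge0$ and $L$-smooth ($L>0$); $r:\mathbb{R}^d\to\mathbb{R}\cup\{\infty\}$ is proper, closed, convex. For $\bm{x}=\mathrm{col}\{x_1,\dots,x_n\}\in\mathbb{R}^{nd}$, $F(\bm{x})=\sum_i f_i(x_i)$, $R(\bm{x})=\sum_i r(x_i)$, $\mathrm{prox}_{\alpha r}(x)=\arg\min_s\{r(s)+\frac1{2\alpha}\|s-x\|^2\}$ and $\mathrm{prox}_{\alpha R}$ acts blockwise. $W\in\mathbb{R}^{n\times n}$ is symmetric, $W\bm1=\bm1$, $W_{ij}>0$ on edges of an undirected connected graph and $W_{ij}=0$ for non-adjacent $i\ne j$. $A,B$ are polynomials in $W$ with $A^{\sf T}=A$, $A\bm1=\bm1$, $B\succeq0$, $\mathrm{null}(B)=\mathrm{span}(\bm1)$, $I-A^2-B\succeq0$; $\bm A=A\otimes I_d$, $\bm B=B\otimes I_d$, $\sqrt{\bm B}=\sqrt B\otimes I_d$ (PSD square root); $\sigma_m(\bm B)$ is the smallest nonzero singular value of $\bm B$. Algorithm (FlexATC, equivalent form): $\theta_0,\theta_1,\dots$ are i.i.d. in $\{0,1\}$ with $\mathrm{Prob}(\theta_k=1)=p$; $\bm{A}_k=\theta_k\bm{A}+(1-\theta_k)\bm{I}$ and $\sqrt{\bm{B}_k}=\theta_k\sqrt{\bm B}$. Given $\bm{x}^0\in\mathbb{R}^{nd}$ and $\bm{u}^0=\bm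 0$, for $k\ge0$: $\bm{w}^k=\bm{x}^k-\alpha\nabla F(\bm{x}^k)$, $\bm{x}^{k+1}=\mathrm{prox}_{\alpha R}\big(\bm{A}_k(\bm{w}^k-\sqrt{\bm B}\bm{u}^k)\big)$, $\bm{u}^{k+1}=\bm{u}^k+p\sqrt{\bm B_k}(\bm w^k-\sqrt{\bm B}\bm u^k)$. *)

From mathcomp Require Import all_boot all_algebra.
From mathcomp Require Import all_classical all_reals all_analysis.
Import GRing.Theory Num.Theory.
Import numFieldNormedType.Exports.

Set Implicit Arguments.
Unset Strict Implicit.
Unset Printing Implicit Defensive.

Local Open Scope ring_scope.

(* Representation convention: a stacked vector col{x_1,...,x_n} in R^{nd} is
   represented by the n x d matrix X whose i-th row is x_i.  Then
   (M (x) I_d) col{x_i} corresponds to M *m X, and the Euclidean norm of the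
   stacked vector is the Frobenius norm of X. *)

Section Defs.
Variable R : realType.

Definition sqnorm m k (X : 'M[R]_(m, k)) : R := \sum_i \sum_j X i j ^+ 2.

Definition dotr d (u v : 'rV[R]_d) : R := \sum_j u 0 j * v 0 j.

Definition is_gradient d (f : 'rV[R]_d -> R) (g : 'rV[R]_d -> 'rV[R]_d) :=
  forall x : 'rV[R]_d, differentiable f x /\
     ('d f x : 'rV[R]_d -> R) = (fun h => dotr (g x) h).

Definition convex_fun d (h : 'rV[R]_d -> R) :=
  forall (x y : 'rV[R]_d) (t : R), 0 <= t -> t <= 1 ->
    h (t *: x + (1 - t) *: y) <= t * h x + (1 - t) * h y.

Definition strongly_convex d (mu : R) (f : 'rV[R]_d -> R) :=
  convex_fun (fun x => f x - mu / 2 * sqnorm x).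

Definition L_smooth d (L : R) (f : 'rV[R]_d -> R) (g : 'rV[R]_d -> 'rV[R]_d) :=
  is_gradient f g /\
  forall x y, Num.sqrt (sqnorm (g x - g y)) <= L * Num.sqrt (sqnorm (x - y)).

Definition proper_fun d (r : 'rV[R]_d -> \bar R) :=
  (forall x, r x != -oo%E) /\ (exists x, r x \is a fin_num).

Definition closed_fun d (r : 'rV[R]_d -> \bar R) := lower_semicontinuous r.

Definition convex_efun d (r : 'rV[R]_d -> \bar R) :=
  forall (x y : 'rV[R]_d) (t : R), 0 <= t -> t <= 1 ->
    (r (t *: x + (1 - t) *: y)%R <= t%:E * r x + (1 - t)%:E * r y)%E.

Definition is_prox d (alpha : R) (r : 'rV[R]_d -> \bar R) (x s : 'rV[R]_d) :=
  forall y : 'rV[R]_d,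
    (r s + (1 / (2 * alpha) * sqnorm (s - x)%R)%R%:E
       <= r y + (1 / (2 * alpha) * sqnorm (y - x)%R)%R%:E)%E.

Definition undirected_connected n (adj : rel 'I_n) :=
  [/\ forall i j, adj i j = adj j i, forall i, ~~ adj i i
    & forall i j, connect adj i j].

Definition mixing_matrix n (adj : rel 'I_n) (W : 'M[R]_n) :=
  [/\ W^T = W, W *m (const_mx 1 : 'cV[R]_n) = const_mx 1,
      forall i j, adj i j -> 0 < W i j
    & forall i j, i != j -> ~~ adj i j -> W i j = 0].

Definition poly_in n (W M : 'M[R]_n) :=
  exists p : {poly R}, M = \sum_(i < size p) p`_i *: W ^+ i.

Definition psd n (M : 'M[R]_n) :=
  M^T = M /\ forall v : 'cV[R]_n, 0 <= (v^T *m M *m v) 0 0.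

Definition null_span1 n (M : 'M[R]_n) :=
  forall v : 'cV[R]_n, M *m v = 0 <-> exists c : R, v = c *: const_mx 1.

Definition psd_sqrt n (B sB : 'M[R]_n) := psd sB /\ sB *m sB = B.

Definition smallest_nonzero_sv n (M : 'M[R]_n) (s : R) :=
  [/\ 0 < s, eigenvalue (M^T *m M) (s ^+ 2)
    & forall t, 0 < t -> eigenvalue (M^T *m M) (t ^+ 2) -> s <= t].

Definition gradF n d (g : 'I_n -> 'rV[R]_d -> 'rV[R]_d) (X : 'M[R]_(n, d))
  : 'M[R]_(n, d) := \matrix_(i, j) g i (row i X) 0 j.

Definition proxR n d (P : 'rV[R]_d -> 'rV[R]_d) (X : 'M[R]_(n, d))
  : 'M[R]_(n, d) := \matrix_(i, j) P (row i X) 0 j.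

(* One step of FlexATC (equivalent form) with coin theta_k = th, acting on the
   state (x^k, u^k); returns (x^{k+1}, u^{k+1}). *)
Definition flex_step n d (alpha p : R) (A sB : 'M[R]_n)
  (g : 'I_n -> 'rV[R]_d -> 'rV[R]_d) (P : 'rV[R]_d -> 'rV[R]_d) (th : bool)
  (s : 'M[R]_(n, d) * 'M[R]_(n, d)) : 'M[R]_(n, d) * 'M[R]_(n, d) :=
  let x := s.1 in let u := s.2 in
  let w := x - alpha *: gradF g x in
  let v := w - sB *m u in
  let Ak := if th then A else 1%:M in
  let sBk := if th then sB else 0 in
  (proxR P (Ak *m v), u + p *: (sBk *m v)).

Fixpoint flex_iter n d (alpha p : R) (A sB : 'M[R]_n)
  (g : 'I_n -> 'rV[R]_d -> 'rV[R]_d) (P : 'rV[R]_d -> 'rV[R]_d)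
  (theta : nat -> bool) (x0 : 'M[R]_(n, d)) (k : nat)
  : 'M[R]_(n, d) * 'M[R]_(n, d) :=
  match k with
  | 0 => (x0, 0)
  | k'.+1 => flex_step alpha p A sB g P (theta k')
               (flex_iter alpha p A sB g P theta x0 k')
  end.

Definition bern_expect (p : R) (h : bool -> R) : R :=
  p * h true + (1 - p) * h false.

End Defs.

From mathcomp Require Import all_boot all_algebra.
From mathcomp Require Import all_classical all_reals all_analysis.
From mathcomp Require Import complex lra ring.
Import GRing.Theory Num.Theory order.Order.TTheory.
Import numFieldNormedType.Exports.

Set Implicit Arguments.
Unset Strict Implicit.
Unset Printing Implicit Defensive.

Local Open Scope ring_scope.

(* Write v = w - sqrt(B) u for the argument of the prox, vs = ws - sqrt(B) us for
   its value at the fixed point, and e = v - vs.  Then sqrt(B) vs = 0, A vs = vs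
   and xs = prox(vs), so nonexpansiveness of the prox bounds the primal part of the
   expectation by p |A e|^2 + (1 - p) |e|^2, while the dual error becomes
   (u - us) + theta p sqrt(B) e.  Since I - A^2 - B >= 0 we have
   |A e|^2 + |sqrt(B) e|^2 <= |e|^2, and after expanding
   e = (w - ws) - sqrt(B) (u - us) the cross terms cancel, leaving
   |w - ws|^2 - |sqrt(B) (u - us)|^2 + |u - us|^2 / p^2.  Finally u - us lies in
   range(sqrt(B)), which is orthogonal to null(B) = span(1), so
   |sqrt(B) (u - us)|^2 >= sigma |u - us|^2 by the spectral theorem for B. *)

Section Frobenius.
Variable R : realType.

Lemma col_mulmx m n k (M : 'M[R]_(m, n)) (X : 'M[R]_(n, k)) j :
  col j (M *m X) = M *m col j X.
Proof. by rewrite !colE mulmxA. Qed.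

Definition frobdot m k (X Y : 'M[R]_(m, k)) : R := \tr (X^T *m Y).

Lemma frobdotE m k (X Y : 'M[R]_(m, k)) :
  frobdot X Y = \sum_j ((col j X)^T *m col j Y) 0 0.
Proof.
by apply: eq_bigr => j _; rewrite !mxE; apply: eq_bigr => i _; rewrite !mxE.
Qed.

Lemma sqnormE m k (X : 'M[R]_(m, k)) : sqnorm X = frobdot X X.
Proof.
rewrite frobdotE /sqnorm exchange_big; apply: eq_bigr => j _.
by rewrite mxE; apply: eq_bigr => i _; rewrite !mxE expr2.
Qed.

Lemma sqnorm_rows m k (X : 'M[R]_(m, k)) : sqnorm X = \sum_i sqnorm (row i X).
Proof.
by apply: eq_bigr => i _; rewrite /sqnorm big_ord1; apply: eq_bigr => j _; rewrite mxE.
Qed.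

Lemma frobdotC m k (X Y : 'M[R]_(m, k)) : frobdot X Y = frobdot Y X.
Proof. by rewrite /frobdot -mxtrace_tr trmx_mul trmxK. Qed.

Lemma frobdotDl m k (X Y Z : 'M[R]_(m, k)) :
  frobdot (X + Y) Z = frobdot X Z + frobdot Y Z.
Proof. by rewrite /frobdot linearD mulmxDl mxtraceD. Qed.

Lemma frobdotZl m k a (X Y : 'M[R]_(m, k)) :
  frobdot (a *: X) Y = a * frobdot X Y.
Proof. by rewrite /frobdot linearZ -scalemxAl mxtraceZ. Qed.

Lemma frobdotNl m k (X Y : 'M[R]_(m, k)) : frobdot (- X) Y = - frobdot X Y.
Proof. by rewrite -scaleN1r frobdotZl mulN1r. Qed.

Lemma frobdotBl m k (X Y Z : 'M[R]_(m, k)) :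
  frobdot (X - Y) Z = frobdot X Z - frobdot Y Z.
Proof. by rewrite frobdotDl frobdotNl. Qed.

Lemma frobdotDr m k (X Y Z : 'M[R]_(m, k)) :
  frobdot Z (X + Y) = frobdot Z X + frobdot Z Y.
Proof. by rewrite !(frobdotC Z) frobdotDl. Qed.

Lemma frobdotZr m k a (X Y : 'M[R]_(m, k)) :
  frobdot Y (a *: X) = a * frobdot Y X.
Proof. by rewrite !(frobdotC Y) frobdotZl. Qed.

Lemma frobdotNr m k (X Y : 'M[R]_(m, k)) : frobdot Y (- X) = - frobdot Y X.
Proof. by rewrite !(frobdotC Y) frobdotNl. Qed.

Lemma frobdotBr m k (X Y Z : 'M[R]_(m, k)) :
  frobdot Z (X - Y) = frobdot Z X - frobdot Z Y.
Proof. by rewrite !(frobdotC Z) frobdotBl. Qed.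

Lemma frobdot_mull m k l (M : 'M[R]_(m, l)) (X : 'M[R]_(l, k)) Y :
  frobdot (M *m X) Y = frobdot X (M^T *m Y).
Proof. by rewrite /frobdot trmx_mul mulmxA. Qed.

Lemma frobdot_ge0 m k (X : 'M[R]_(m, k)) : 0 <= frobdot X X.
Proof. by rewrite -sqnormE; do 2!apply: sumr_ge0 => ? _; apply: sqr_ge0. Qed.

Lemma frobdot_eq0 m k (X : 'M[R]_(m, k)) : frobdot X X = 0 -> X = 0.
Proof.
rewrite -sqnormE => /eqP; rewrite psumr_eq0 => [/allP X0|i _]; last first.
  by apply: sumr_ge0 => j _; apply: sqr_ge0.
apply/matrixP => i j; move/(_ i (mem_index_enum _))/eqP: X0.
rewrite mxE => /eqP; rewrite psumr_eq0 => [/allP/(_ j (mem_index_enum _))|].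
  by rewrite sqrf_eq0 => /eqP.
by move=> l _; apply: sqr_ge0.
Qed.

Lemma sqnormDZ m k t (X Y : 'M[R]_(m, k)) :
  sqnorm (X + t *: Y) = sqnorm X + 2 * t * frobdot X Y + t ^+ 2 * sqnorm Y.
Proof.
by rewrite !sqnormE frobdotDl !frobdotDr !frobdotZl !frobdotZr (frobdotC Y X); ring.
Qed.

Lemma sqnormB m k (X Y : 'M[R]_(m, k)) :
  sqnorm (X - Y) = sqnorm X - 2 * frobdot X Y + sqnorm Y.
Proof. by rewrite !sqnormE frobdotBl !frobdotBr (frobdotC Y X); ring. Qed.

Lemma frobdot_le_sqnorm m k (X Y : 'M[R]_(m, k)) :
  2 * frobdot X Y <= sqnorm X + sqnorm Y.
Proof. by have := frobdot_ge0 (X - Y); rewrite -sqnormE sqnormB; lra. Qed.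

Lemma psd_frobdot_ge0 n k (M : 'M[R]_n) (X : 'M[R]_(n, k)) :
  psd M -> 0 <= frobdot X (M *m X).
Proof.
case=> _ M_ge0; rewrite frobdotE; apply: sumr_ge0 => j _.
by rewrite col_mulmx mulmxA.
Qed.

End Frobenius.

Lemma le_of_forall_shrink (R : realFieldType) (a b : R) :
  (forall t, 0 < t -> t <= 1 -> (1 - t) * a <= b) -> a <= b.
Proof.
move=> shrink; have b_ge0 : 0 <= b.
  by have := shrink 1 ltr01 (lexx 1); rewrite subrr mul0r.
have [//|lt_ba] := lerP a b.
have a_gt0 : 0 < a := le_lt_trans b_ge0 lt_ba.
(* This [t] makes [(1 - t) * a] the midpoint of [a] and [b]. *)
pose t := (a - b) / (2 * a).
have t_gt0 : 0 < t by rewrite divr_gt0 ?subr_gt0 ?mulr_gt0.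
have t_le1 : t <= 1 by rewrite ler_pdivrMr ?mulr_gt0 //; lra.
have := shrink t t_gt0 t_le1.
have -> : (1 - t) * a = (a + b) / 2 by rewrite /t; field; rewrite gt_eqF.
rewrite ler_pdivrMr //; lra.
Qed.

Section Prox.
Variables (R : realType) (d : nat) (alpha : R).
Variables (r : 'rV[R]_d -> \bar R) (P : 'rV[R]_d -> 'rV[R]_d).
Hypotheses (alpha_gt0 : 0 < alpha) (r_proper : proper_fun r)
  (r_convex : convex_efun r) (P_prox : forall x, is_prox alpha r x (P x)).

Lemma prox_fin_num x : r (P x) \is a fin_num.
Proof.
case: r_proper => r_neqNy [x0 x0_fin].
have := P_prox x x0; rewrite -(fineK x0_fin).
by case E: (r (P x)) => [//| //|]; have := r_neqNy (P x); rewrite E.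
Qed.

(* Optimality of [P x] against the segment towards [P y], divided by [t]. *)
Lemma prox_variational x y t : 0 < t -> t <= 1 ->
  0 <= fine (r (P y)) - fine (r (P x)) + (2 * alpha)^-1 *
    (2 * frobdot (P x - x) (P y - P x) + t * sqnorm (P y - P x)).
Proof.
move=> t_gt0 t_le1.
have opt := P_prox x (t *: P y + (1 - t) *: P x).
have cvx := r_convex (P y) (P x) (ltW t_gt0) t_le1.
rewrite -(fineK (prox_fin_num x)) in opt cvx.
rewrite -(fineK (prox_fin_num y)) in cvx.
have := le_trans opt (leeD2r _ cvx); rewrite -!EFinM -!EFinD lee_fin.
set u := P x - x; set v := P y - P x.
have -> : t *: P y + (1 - t) *: P x - x = u + t *: v.
  by apply/matrixP => i j; rewrite !mxE; ring.
clearbody u v.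
rewrite sqnormDZ mul1r => ineq.
by rewrite -(pmulr_rge0 _ t_gt0); move: ineq; nra.
Qed.

Lemma prox_firmly_nonexpansive a b :
  sqnorm (P a - P b) <= frobdot (a - b) (P a - P b).
Proof.
apply: le_of_forall_shrink => t t_gt0 t_le1.
have opt_ab := prox_variational a b t_gt0 t_le1.
have opt_ba := prox_variational b a t_gt0 t_le1.
set s := P a - P b in opt_ba *; set e := a - b; set c := P b - b in opt_ba.
have Eba : P b - P a = - s by rewrite opprB.
have Ea : P a - a = c + s - e.
  by rewrite /c /s /e; apply/matrixP => i j; rewrite !mxE; ring.
rewrite Eba Ea in opt_ab.
clearbody s e c.
rewrite !sqnormE !(frobdotDl, frobdotBl, frobdotNl, frobdotNr) in opt_ab opt_ba *.
have k_gt0 : 0 < (2 * alpha)^-1 by rewrite invr_gt0 mulr_gt0.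
(* Adding the two inequalities cancels the values of [r]. *)
have : 0 <= (2 * alpha)^-1 * (2 * (frobdot e s - (1 - t) * frobdot s s)).
  by move: opt_ab opt_ba; lra.
by rewrite pmulr_rge0 // pmulr_rge0 // subr_ge0.
Qed.

Lemma prox_nonexpansive a b : sqnorm (P a - P b) <= sqnorm (a - b).
Proof.
have := prox_firmly_nonexpansive a b; have := frobdot_le_sqnorm (a - b) (P a - P b).
lra.
Qed.

Lemma proxR_nonexpansive n (X Y : 'M[R]_(n, d)) :
  sqnorm (proxR P X - proxR P Y) <= sqnorm (X - Y).
Proof.
rewrite !(sqnorm_rows (_ - _)); apply: ler_sum => i _.
have -> : row i (proxR P X - proxR P Y) = P (row i X) - P (row i Y).
  by apply/rowP => j; rewrite !mxE.
by rewrite linearB; apply: prox_nonexpansive.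
Qed.

End Prox.

Section RealSpectrum.
Variable R : realType.
Local Notation C := R[i].
Local Notation rc := (real_complex R).
Local Open Scope sesquilinear_scope.

Lemma conj_real_complex (r : R) : (r%:C)%C^* = (r%:C)%C :> C.
Proof. by apply/eqP; rewrite eq_complex /= oppr0 !eqxx. Qed.

Lemma Re_sum n (F : 'I_n -> C) : complex.Re (\sum_j F j) = \sum_j complex.Re (F j).
Proof. by elim/big_rec2: _ => [//|j a z _ <-]; case: (F j) => ? ?; case: z. Qed.

Lemma Im_sum n (F : 'I_n -> C) : complex.Im (\sum_j F j) = \sum_j complex.Im (F j).
Proof. by elim/big_rec2: _ => [//|j a z _ <-]; case: (F j) => ? ?; case: z. Qed.

Lemma Re_mulr_real (z : C) (r : R) : complex.Re (z * (r%:C)%C) = complex.Re z * r.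
Proof. by case: z => a b /=; rewrite mulr0 subr0. Qed.

Lemma Im_mulr_real (z : C) (r : R) : complex.Im (z * (r%:C)%C) = complex.Im z * r.
Proof. by case: z => a b /=; rewrite mulr0 add0r. Qed.

Lemma eigenvalue_real_complex n (B : 'M[R]_n) a :
  eigenvalue (map_mx rc B) (a%:C)%C -> eigenvalue B a.
Proof. by rewrite !eigenvalue_root_char -map_char_poly fmorph_root. Qed.

Lemma real_complex_hermsym n (B : 'M[R]_n) : B^T = B -> map_mx rc B \is hermsymmx.
Proof.
move=> Bsym; rewrite qualifE /= expr0 scale1r; apply/eqP/matrixP => i j.
by rewrite !mxE conj_real_complex -[in LHS]Bsym mxE.
Qed.

Lemma psd_eigenvalue_ge0 n (B : 'M[R]_n) a : psd B -> eigenvalue B a -> 0 <= a.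
Proof.
case=> _ B_ge0 /eigenvalueP[u uB u_neq0].
have uu_gt0 : 0 < frobdot u^T u^T.
  rewrite lt0r frobdot_ge0 andbT; apply: contra u_neq0 => /eqP/frobdot_eq0.
  by move/(congr1 trmx); rewrite trmxK trmx0 => ->.
have := B_ge0 u^T; rewrite trmxK uB -scalemxAl mxE.
by rewrite /frobdot trmxK /mxtrace big_ord1 in uu_gt0; rewrite pmulr_lge0.
Qed.

Lemma sv_le_eigenvalue n (B : 'M[R]_n) s a :
  B^T = B -> smallest_nonzero_sv B s -> eigenvalue B a -> 0 < a -> s <= a.
Proof.
move=> Bsym [_ _ s_min] /eigenvalueP[u uB u_neq0] a_gt0.
apply: s_min => //; apply/eigenvalueP; exists u => //.
by rewrite Bsym mulmxA uB -scalemxAl uB scalerA expr2.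
Qed.

Lemma null_span1_complex_const n (B : 'M[R]_n) (v : 'rV[C]_n) :
  B^T = B -> null_span1 B -> v *m map_mx rc B = 0 -> exists z, forall j, v 0 j = z.
Proof.
move=> Bsym Bnull vB0.
(* The real and imaginary parts of [v] lie in the real kernel [span 1]. *)
have part_const (h : C -> R) :
    (forall z r, h (z * (r%:C)%C) = h z * r) ->
    (forall F : 'I_n -> C, h (\sum_j F j) = \sum_j h (F j)) -> h 0 = 0 ->
    exists c, forall j, h (v 0 j) = c.
  move=> hM hS h0; pose hv : 'cV[R]_n := \col_j h (v 0 j).
  have [|c hvE] := (Bnull hv).1.
    apply/matrixP => k l; rewrite !mxE -[RHS]h0.
    move/matrixP: vB0 => /(_ 0 k); rewrite !mxE => <-; rewrite hS.
    by apply: eq_bigr => j _; rewrite !mxE hM mulrC -[in LHS]Bsym mxE.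
  by exists c => j; move/matrixP: hvE => /(_ j 0); rewrite !mxE mulr1.
have [a Ra] := part_const _ Re_mulr_real (@Re_sum n) erefl.
have [b Ib] := part_const _ Im_mulr_real (@Im_sum n) erefl.
by exists (a +i* b)%C => j; move: (Ra j) (Ib j); case: (v 0 j) => ? ? /= -> ->.
Qed.

Lemma spectral_mul n (M : 'M[C]_n) : M \is hermsymmx ->
  spectralmx M *m M = diag_mx (spectral_diag M) *m spectralmx M.
Proof.
move=> /hermitian_normalmx/orthomx_spectralP {2}->.
rewrite invmx_unitary ?spectral_unitarymx // !mulmxA.
by rewrite (unitarymxP _) ?mul1mx ?spectral_unitarymx.
Qed.

Lemma spectral_row_neq0 n (M : 'M[C]_n) i : row i (spectralmx M) != 0.
Proof.
apply/eqP => Pi0; have /unitarymxP/matrixP/(_ i i) := spectral_unitarymx M.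
rewrite !mxE eqxx /= big1 => [/eqP|j _]; first by rewrite eq_sym oner_eq0.
by move/rowP: Pi0 => /(_ j); rewrite !mxE => ->; rewrite mul0r.
Qed.

(* Row [i] of [spectralmx M] is an eigenvector for [spectral_diag M 0 i]; when that
   eigenvalue is [0] the row lies in the kernel [span 1] of [B]. *)
Lemma spectral_diag_sv n (B : 'M[R]_n) s i :
  psd B -> null_span1 B -> smallest_nonzero_sv B s ->
  let M := map_mx rc B in
  (s%:C)%C <= spectral_diag M 0 i \/ exists z, forall j, spectralmx M i j = z.
Proof.
move=> Bpsd Bnull Bsv M; have Mherm := real_complex_hermsym Bpsd.1.
pose a := complex.Re (spectral_diag M 0 i).
have Da : spectral_diag M 0 i = (a%:C)%C.
  by rewrite RRe_real //; apply: (mxOverP (hermitian_spectral_diag_real Mherm)).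
have rowE : row i (spectralmx M) *m M = (a%:C)%C *: row i (spectralmx M).
  by rewrite -row_mul spectral_mul // mul_diag_mx; apply/rowP => j; rewrite !mxE Da.
have eig_a : eigenvalue B a.
  by apply: eigenvalue_real_complex; apply/eigenvalueP; exists (row i (spectralmx M));
    rewrite ?spectral_row_neq0.
have [a0|a_neq0] := eqVneq a 0.
  right; have [|z Pz] := null_span1_complex_const Bpsd.1 Bnull (v := row i (spectralmx M)).
    by rewrite rowE a0 scale0r.
  by exists z => j; rewrite -(Pz j) mxE.
left; rewrite Da lecR; apply: (sv_le_eigenvalue Bpsd.1 Bsv eig_a).
by rewrite lt0r a_neq0 (psd_eigenvalue_ge0 Bpsd eig_a).
Qed.

Lemma sv_quad_le n (B : 'M[R]_n) s (x : 'cV[R]_n) :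
  psd B -> null_span1 B -> smallest_nonzero_sv B s ->
  (const_mx 1 : 'rV[R]_n) *m x = 0 ->
  s * (x^T *m x) 0 0 <= (x^T *m B *m x) 0 0.
Proof.
move=> Bpsd Bnull Bsv x_perp1.
pose M := map_mx rc B; pose P := spectralmx M; pose D := spectral_diag M.
have PtP : P^t* *m P = 1%:M by apply/mulmx1C/unitarymxP/spectral_unitarymx.
have ME : M = P^t* *m diag_mx D *m P.
  have /hermitian_normalmx/orthomx_spectralP := real_complex_hermsym Bpsd.1.
  by rewrite invmx_unitary ?spectral_unitarymx.
pose y : 'rV[C]_n := (map_mx rc x)^T.
have yt : y^t* = map_mx rc x.
  by apply/matrixP => i j; rewrite !mxE conj_real_complex.
(* [c] holds the coordinates of [x] in the eigenbasis of [B]. *)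
pose c := y *m P^t*.
have ct : c^t* = P *m y^t* by rewrite trmx_mul map_mxM trmxCK.
have quadE : (((x^T *m B *m x) 0 0)%:C)%C = \sum_i D 0 i * (c 0 i * (c 0 i)^*).
  have -> : (((x^T *m B *m x) 0 0)%:C)%C = (c *m diag_mx D *m c^t*) 0 0.
    have -> : c *m diag_mx D *m c^t* = y *m M *m y^t* by rewrite ME ct /c !mulmxA.
    by rewrite yt /y map_trmx -!map_mxM [RHS]mxE.
  rewrite mul_mx_diag mxE; apply: eq_bigr => i _.
  by rewrite !mxE mulrCA mulrA.
have normE : (((x^T *m x) 0 0)%:C)%C = \sum_i c 0 i * (c 0 i)^*.
  have -> : (((x^T *m x) 0 0)%:C)%C = (c *m c^t*) 0 0.
    by rewrite ct /c -(mulmxA y) (mulmxA _ P) PtP mul1mx yt /y map_trmx -map_mxM [RHS]mxE.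
  by rewrite mxE; apply: eq_bigr => i _; rewrite !mxE.
have term i : (s%:C)%C * (c 0 i * (c 0 i)^*) <= D 0 i * (c 0 i * (c 0 i)^*).
  have [le_sD|[z Pz]] := spectral_diag_sv i Bpsd Bnull Bsv.
    by rewrite ler_wpM2r ?mul_conjC_ge0.
  suff -> : c 0 i = 0 by rewrite mul0r !mulr0.
  rewrite mxE (eq_bigr (fun j => (x j 0)%:C%C * z^*)); last first.
    by move=> j _; rewrite !mxE -/P Pz.
  rewrite -big_distrl /= -rmorph_sum.
  suff -> : \sum_j x j 0 = 0 by rewrite rmorph0 mul0r.
  transitivity (((const_mx 1 : 'rV[R]_n) *m x) 0 0); last by rewrite x_perp1 mxE.
  by rewrite mxE; apply: eq_bigr => j _; rewrite mxE mul1r.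
rewrite -lecR rmorphM /= quadE normE mulr_sumr.
by apply: ler_sum => i _.
Qed.

End RealSpectrum.

Section MatrixFacts.
Variable R : realType.

Lemma psd_sqrt_ker n k (B sB : 'M[R]_n) (X : 'M[R]_(n, k)) :
  psd_sqrt B sB -> B *m X = 0 -> sB *m X = 0.
Proof.
case=> [[sBsym _] sBB] BX0; apply: frobdot_eq0.
by rewrite frobdot_mull sBsym mulmxA sBB BX0 /frobdot mulmx0 linear0.
Qed.

Lemma null_span1_fix n k (A B : 'M[R]_n) (X : 'M[R]_(n, k)) :
  null_span1 B -> A *m (const_mx 1 : 'cV[R]_n) = const_mx 1 -> B *m X = 0 -> A *m X = X.
Proof.
move=> Bnull A1 BX0; apply/matrixP => i j.
have [|c Xj] := (Bnull (col j X)).1; first by rewrite colE mulmxA BX0 mul0mx.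
have : A *m col j X = col j X by rewrite Xj -scalemxAr A1.
by move/matrixP => /(_ i 0); rewrite colE mulmxA -!colE !mxE.
Qed.

Lemma psd_contraction n k (A B sB : 'M[R]_n) (X : 'M[R]_(n, k)) :
  A^T = A -> psd_sqrt B sB -> psd (1%:M - A ^+ 2 - B) ->
  sqnorm (A *m X) + sqnorm (sB *m X) <= sqnorm X.
Proof.
move=> Asym [[sBsym _] sBB] IAB; have := psd_frobdot_ge0 X IAB.
rewrite !sqnormE !mulmxBl mul1mx !frobdotBr !frobdot_mull Asym sBsym !mulmxA sBB.
by rewrite expr2 -mulmxE; lra.
Qed.

Lemma sv_psd_sqrt_le n k (B sB : 'M[R]_n) s (Y : 'M[R]_(n, k)) :
  psd B -> null_span1 B -> smallest_nonzero_sv B s -> psd_sqrt B sB ->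
  s * sqnorm (sB *m Y) <= sqnorm (B *m Y).
Proof.
move=> Bpsd Bnull Bsv sB_sqrt; have [[sBsym _] sBB] := sB_sqrt.
have one_sB : (const_mx 1 : 'rV[R]_n) *m sB = 0.
  rewrite -[sB]sBsym -(trmx_const n 1) -trmx_mul (psd_sqrt_ker sB_sqrt) ?trmx0 //.
  by apply/(Bnull _).2; exists 1; rewrite scale1r.
have -> : sqnorm (B *m Y) = frobdot (sB *m Y) (B *m (sB *m Y)).
  by rewrite sqnormE -sBB -!mulmxA frobdot_mull sBsym.
rewrite sqnormE !frobdotE mulr_sumr; apply: ler_sum => j _.
rewrite [col j (B *m _)]col_mulmx mulmxA; apply: sv_quad_le => //.
by rewrite col_mulmx mulmxA one_sB mul0mx.
Qed.

End MatrixFacts.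

Lemma flex_iter_dual_range (R : realType) n d (alpha p : R) (A sB : 'M[R]_n)
    g P theta (x0 : 'M[R]_(n, d)) k :
  exists Z, (flex_iter alpha p A sB g P theta x0 k).2 = sB *m Z.
Proof.
elim: k => [|k [Z IH]] /=; first by exists 0; rewrite mulmx0.
rewrite /flex_step /=; case: (theta k) => /=.
  by eexists; rewrite IH scalemxAr -mulmxDr.
by exists Z; rewrite mul0mx scaler0 addr0.
Qed.

Section Descent.
Variables (R : realType) (n d : nat) (A B sB : 'M[R]_n) (sigma p : R).
Variable P : 'rV[R]_d -> 'rV[R]_d.
Hypotheses (Asym : A^T = A) (sB_sqrt : psd_sqrt B sB)
  (IAB : psd (1%:M - A ^+ 2 - B))
  (sv_sB : forall Y : 'M[R]_(n, d), sigma * sqnorm (sB *m Y) <= sqnorm (B *m Y))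
  (p_gt0 : 0 < p) (p_le1 : p <= 1)
  (P_nonexp : forall X Y : 'M[R]_(n, d),
     sqnorm (proxR P X - proxR P Y) <= sqnorm (X - Y)).

Lemma flex_step_descent (w u ws us Z : 'M[R]_(n, d)) :
  sB *m (ws - sB *m us) = 0 -> A *m (ws - sB *m us) = ws - sB *m us ->
  u - us = sB *m Z ->
  p * (sqnorm (proxR P (A *m (w - sB *m u)) - proxR P (ws - sB *m us))
        + 1 / p ^+ 2 * sqnorm (u + p *: (sB *m (w - sB *m u)) - us))
  + (1 - p) * (sqnorm (proxR P (1%:M *m (w - sB *m u)) - proxR P (ws - sB *m us))
        + 1 / p ^+ 2 * sqnorm (u + p *: (0 *m (w - sB *m u)) - us))
  <= sqnorm (w - ws) + (1 - p ^+ 2 * sigma) * (1 / p ^+ 2 * sqnorm (u - us)).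
Proof.
set vs := ws - sB *m us; set v := w - sB *m u => sBvs Avs deE.
have [[sBsym _] sBB] := sB_sqrt.
have le_A := P_nonexp (A *m v) (A *m vs); rewrite -mulmxBr Avs in le_A.
have le_I := P_nonexp v vs; rewrite mul1mx.
have dualE : u + p *: (sB *m v) - us = (u - us) + p *: (sB *m (v - vs)).
  by rewrite (mulmxBr sB v vs) sBvs subr0; apply/matrixP => i j; rewrite !mxE; ring.
rewrite dualE mul0mx scaler0 addr0.
have eE : v - vs = (w - ws) - sB *m (u - us).
  by rewrite mulmxBr; apply/matrixP => i j; rewrite !mxE; ring.
have contr := psd_contraction (v - vs) Asym sB_sqrt IAB.
have sv := sv_sB Z; rewrite -deE -sBB -mulmxA -deE in sv.
set e := v - vs in eE le_A le_I contr *.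
set om := w - ws in eE *; set de := u - us in eE sv *.
clearbody e om de.
(* The cross terms of the primal and dual errors cancel through this identity. *)
have crossE : frobdot de (sB *m e) = frobdot om (sB *m de) - sqnorm (sB *m de).
  by rewrite frobdotC frobdot_mull sBsym eE frobdotBl sqnormE.
have normE : sqnorm e = sqnorm om - 2 * frobdot om (sB *m de) + sqnorm (sB *m de).
  by rewrite eE sqnormB.
rewrite sqnormDZ crossE; rewrite normE in le_I contr.
set T1 := sqnorm (proxR P (A *m v) - _) in le_A *.
set T2 := sqnorm (proxR P v - _) in le_I *.
set X := frobdot om _ in le_I contr *.
set Sd := sqnorm (sB *m de) in le_I contr sv *.
have -> : p * (T1 + 1 / p ^+ 2 * (sqnorm de + 2 * p * (X - Sd) + p ^+ 2 * sqnorm (sB *m e)))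
          + (1 - p) * (T2 + 1 / p ^+ 2 * sqnorm de)
        = p * (T1 + sqnorm (sB *m e)) + (1 - p) * T2 + 2 * (X - Sd) + 1 / p ^+ 2 * sqnorm de.
  by field; rewrite gt_eqF.
have -> : (1 - p ^+ 2 * sigma) * (1 / p ^+ 2 * sqnorm de)
        = 1 / p ^+ 2 * sqnorm de - sigma * sqnorm de.
  by field; rewrite gt_eqF.
have : p * (T1 + sqnorm (sB *m e)) <= p * (sqnorm om - 2 * X + Sd).
  by rewrite ler_wpM2l ?(ltW p_gt0) //; lra.
have : (1 - p) * T2 <= (1 - p) * (sqnorm om - 2 * X + Sd).
  by rewrite ler_wpM2l ?subr_ge0.
lra.
Qed.

End Descent.

Theorem lemma2 (R : realType) (n d : nat)
  (f : 'I_n -> 'rV[R]_d -> R) (g : 'I_n -> 'rV[R]_d -> 'rV[R]_d)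
  (mu L : R) (r : 'rV[R]_d -> \bar R) (P : 'rV[R]_d -> 'rV[R]_d)
  (adj : rel 'I_n) (W A B sB : 'M[R]_n) (sigma alpha p : R)
  (xs ws us x0 : 'M[R]_(n, d)) :
  0 <= mu -> 0 < L ->
  (forall i, strongly_convex mu (f i)) ->
  (forall i, L_smooth L (f i) (g i)) ->
  proper_fun r -> closed_fun r -> convex_efun r ->
  undirected_connected adj -> mixing_matrix adj W ->
  poly_in W A -> poly_in W B ->
  A^T = A -> A *m (const_mx 1 : 'cV[R]_n) = const_mx 1 ->
  psd B -> null_span1 B -> psd (1%:M - A ^+ 2 - B) ->
  psd_sqrt B sB ->
  smallest_nonzero_sv B sigma ->
  0 < alpha -> 0 < p -> p <= 1 ->
  (forall x, is_prox alpha r x (P x)) ->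
  ws = xs - alpha *: gradF g xs ->
  xs = proxR P (A *m (ws - sB *m us)) ->
  0 = sB *m (ws - sB *m us) ->
  (exists Z : 'M[R]_(n, d), us = sB *m Z) ->
  forall (theta : nat -> bool) (k : nat),
    let s := flex_iter alpha p A sB g P theta x0 k in
    let wk := s.1 - alpha *: gradF g s.1 in
    bern_expect p (fun th =>
        let s' := flex_step alpha p A sB g P th s in
        sqnorm (s'.1 - xs) + 1 / p ^+ 2 * sqnorm (s'.2 - us))
    <= sqnorm (wk - ws) + (1 - p ^+ 2 * sigma) * (1 / p ^+ 2 * sqnorm (s.2 - us)).
Proof.
move=> _ _ _ _ r_proper _ r_convex _ _ _ _ Asym A1 Bpsd Bnull IAB sB_sqrt Bsv
  alpha_gt0 p_gt0 p_le1 P_prox _ xsE sBvs [Zs usE] theta k /=.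
set s := flex_iter _ _ _ _ _ _ _ _ _.
have [Zk ukE] := flex_iter_dual_range alpha p A sB g P theta x0 k.
have deE : s.2 - us = sB *m (Zk - Zs) by rewrite ukE usE mulmxBr.
have Bvs : B *m (ws - sB *m us) = 0 by rewrite -sB_sqrt.2 -mulmxA -sBvs mulmx0.
have Avs := null_span1_fix Bnull A1 Bvs.
have sv (Y : 'M[R]_(n, d)) := sv_psd_sqrt_le Y Bpsd Bnull Bsv sB_sqrt.
have nonexp X Y := proxR_nonexpansive alpha_gt0 r_proper r_convex P_prox (n := n) X Y.
rewrite /bern_expect /flex_step /= xsE Avs.
exact: (flex_step_descent Asym sB_sqrt IAB sv p_gt0 p_le1 nonexp _ (esym sBvs) Avs deE).
Qed.
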